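(* Let $f(x)\in\mathbb{Q}(x)$ be a rational function of degree $2$. Then: (a) If $f$ has two distinct poles in $\mathbb{P}^1(\mathbb{Q})$, then $f$ satisfies WP. (b) If $f$ has exactly one pole in $\mathbb{P}^1(\mathbb{Q})$, then $f$ satisfies the EWP but does not satisfy WP. (c) If $f$ has no pole in $\mathbb{P}^1(\mathbb{Q})$, then $f$ does not satisfy the EWP.
   Context: For $X\subseteq\mathbb{Q}$ and a positive integer $N$, write $X_N:=\{x_1+\cdots+x_N : x_1,\dots,x_N\in X\}$. $X$ is a base if $X_N=\mathbb{Q}$ for some $N\ge 1$; $X$ is a virtual base if for some $N\ge 1$ every rational number can be written as $\epsilon_1x_1+\cdots+\epsilon_Nx_N$ with $x_i\in X$ and $\epsilon_i\in\{1,-1\}$. For $f\in\mathbb{Q}(x)$, $f(\mathbb{Q})$ is the set of values $f(a)$ at $a\in\mathbb{Q}$ not a pole of $f$; $f$ satisfies WP if $f(\mathbb{Q})$ is a base and satisfies the EWP if $f(\mathbb{Q})$ is a virtual base. The degree of a rational function is the maximum of the degrees of numerator and denominator in lowest terms; poles are considered on the projective line including $\infty$. *)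

(* A rational function f in Q(x) is represented in lowest
   terms as p/q with p q : {poly rat}, q != 0, coprimep p q. *)
From HB Require Import structures.
From mathcomp Require Import all_boot all_order all_algebra.
Set Implicit Arguments. Unset Strict Implicit. Unset Printing Implicit Defensive.
Import Order.TTheory GRing.Theory Num.Theory.
Local Open Scope ring_scope.

Definition lowest_terms (p q : {poly rat}) : Prop := q != 0 /\ coprimep p q.

Definition ratfun_deg (p q : {poly rat}) : nat := maxn (size p).-1 (size q).-1.

Definition ratfun_values (p q : {poly rat}) (y : rat) : Prop :=
  exists a : rat, q.[a] != 0 /\ y = p.[a] / q.[a].

Definition sumset (X : rat -> Prop) (N : nat) (y : rat) : Prop :=
  exists xs : seq rat, size xs = N /\ (forall x, x \in xs -> X x) /\
    y = \sum_(x <- xs) x.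

Definition is_base (X : rat -> Prop) : Prop :=
  exists N : nat, (1 <= N)%N /\ forall y : rat, sumset X N y.

Definition is_virtual_base (X : rat -> Prop) : Prop :=
  exists N : nat, (1 <= N)%N /\ forall y : rat,
    exists (xs : seq rat) (eps : seq bool),
      size xs = N /\ size eps = N /\ (forall x, x \in xs -> X x) /\
      y = \sum_(i < N) ((-1) ^+ nth false eps i * nth 0 xs i).

Definition WP (p q : {poly rat}) : Prop := is_base (ratfun_values p q).
Definition EWP (p q : {poly rat}) : Prop := is_virtual_base (ratfun_values p q).

(* Poles of p/q (lowest terms) in P^1(Q); None stands for the point infinity. *)
Definition is_pole (p q : {poly rat}) (P : option rat) : Prop :=
  match P with
  | None => (size q < size p)%N
  | Some a => root q a
  end.

(* With two rational poles, a Moebius change of variable moving them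
   to 0 and oo turns f into u |-> a u + b + c / u, and every rational is a sum of six
   such values.  With one pole, moving it to oo turns f into a quadratic polynomial in u:
   its values are bounded on one side, so no sumset of them is all of Q, yet every
   rational is a difference of two of them.  Without poles, q is an irreducible quadratic,
   so its discriminant D is not a square and some prime power l^k never divides
   X^2 - D Y^2 when l does not divide Y; completing the square in the homogenized
   denominator shows that l^k f(x) always has denominator prime to l, a property stable
   under signed sums that l^-(k+1) lacks. *)

From HB Require Import structures.
From mathcomp Require Import all_boot all_order all_algebra.
From mathcomp Require Import zify ring lra.
Set Implicit Arguments.
Unset Strict Implicit.
Unset Printing Implicit Defensive.

Import Order.TTheory GRing.Theory Num.Theory.

Lemma three_ndvd_sum_sq (a c : nat) : ~~ (3 %| c) -> ~~ (3 %| a ^ 2 + c ^ 2).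
Proof.
rewrite /dvdn -modnDm -modnXm -[c ^ 2 %% 3]modnXm.
have : a %% 3 < 3 by rewrite ltn_mod.
have : c %% 3 < 3 by rewrite ltn_mod.
move: (a %% 3) (c %% 3) => x y.
by case: y => [|[|[|y]]] //; case: x => [|[|[|x]]].
Qed.

Lemma sum_sq_not_dvd (a b m : nat) : 0 < m -> ~~ (3 %| b) ->
  ~~ (3 ^ (logn 3 m).*2.+1 %| a ^ 2 + m ^ 2 * b ^ 2).
Proof.
move=> m_gt0 b3; have [m' m'3 mE] := pfactor_coprime (isT : prime 3) m_gt0.
set j := logn 3 m in mE *; apply/negP => dvd_sum.
have dvd_a2 : 3 ^ j.*2 %| a ^ 2.
  have dvd_mb : 3 ^ j.*2 %| m ^ 2 * b ^ 2.
    by rewrite mE expnMn -expnM muln2 -mulnA dvdn_mull // dvdn_mulr.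
  by rewrite -(dvdn_addl _ dvd_mb) (dvdn_trans _ dvd_sum) // dvdn_exp2l.
have [a' aE] : exists a', a = a' * 3 ^ j.
  exists (a %/ 3 ^ j); rewrite divnK //.
  have [->|a_gt0] := posnP a; first exact: dvdn0.
  move: dvd_a2; rewrite !pfactor_dvdn ?expn_gt0 ?a_gt0 // lognX -mul2n.
  by rewrite leq_pmul2l.
move: dvd_sum.
have -> : a ^ 2 + m ^ 2 * b ^ 2 = 3 ^ j.*2 * (a' ^ 2 + (m' * b) ^ 2).
  by rewrite aE mE !expnMn -!expnM muln2; ring.
rewrite expnS mulnC dvdn_pmul2l ?expn_gt0 //.
apply/negP; apply: three_ndvd_sum_sq.
by rewrite Euclid_dvdM // negb_or -prime_coprime // m'3.
Qed.

Lemma square_or_odd_logn n : 0 < n ->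
  (exists m, n = m ^ 2) \/ (exists2 p, prime p & odd (logn p n)).
Proof.
elim/ltn_ind: n => n IH n_gt0.
have [n_le1 | n_gt1] := leqP n 1.
  by left; exists 1; apply/eqP; rewrite eqn_leq n_le1.
have [p p_prime p_dvd] : exists2 p, prime p & p %| n.
  by exists (pdiv n); rewrite ?pdiv_prime ?pdiv_dvd.
have [|even_e] := boolP (odd (logn p n)); first by right; exists p.
have p2_dvd : p ^ 2 %| n.
  rewrite pfactor_dvdn //; move: even_e.
  have : 0 < logn p n by rewrite -pfactor_dvdn // expn1.
  by case: (logn p n) => [|[]].
have p2_gt1 : 1 < p ^ 2 by rewrite (leq_trans (prime_gt1 p_prime)) // leq_pmulr ?prime_gt0.
have nE : n = n %/ p ^ 2 * p ^ 2 by rewrite divnK.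
have n'_gt0 : 0 < n %/ p ^ 2 by rewrite divn_gt0 ?expn_gt0 ?prime_gt0 // dvdn_leq.
have n'_lt : n %/ p ^ 2 < n by rewrite ltn_Pdiv // ltnW.
have [[m mE] | [q q_prime odd_q]] := IH _ n'_lt n'_gt0.
  by left; exists (m * p); rewrite nE mE expnMn.
right; exists q => //.
by rewrite nE lognM // ?expn_gt0 ?prime_gt0 // lognX oddD oddM odd_q.
Qed.

Local Open Scope ring_scope.

(* The l-adic valuation of X^2 is even while that of D Y^2 is odd, so that of
   X^2 - D Y^2 is at most logn l |D|. *)
Lemma norm_form_not_dvd_odd_logn (l : nat) (D X Y : int) :
  prime l -> D != 0 -> odd (logn l `|D|) -> ~~ (l %| `|Y|)%N ->
  ~~ ((l ^ (logn l `|D|).+1)%N%:Z %| X ^+ 2 - D * Y ^+ 2)%Z.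
Proof.
move=> l_prime D0 odd_e lY; set e := logn l `|D| in odd_e *.
have dvdzX j (Z : int) : Z != 0 ->
    ((l ^ j)%N%:Z %| Z ^+ 2)%Z = (j <= (logn l `|Z|).*2)%N.
  move=> Z0; rewrite dvdzE absz_nat abszX pfactor_dvdn ?lognX ?mul2n //.
  by rewrite expn_gt0 absz_gt0 Z0.
have ndvd_DY : ~~ ((l ^ e.+1)%N%:Z %| D * Y ^+ 2)%Z.
  have lY2 : coprime (l ^ e.+1) (`|Y| ^ 2).
    by rewrite coprime_pexpl // coprime_pexpr // prime_coprime.
  by rewrite dvdzE absz_nat abszM abszX Gauss_dvdl // pfactor_dvdn ?absz_gt0 // ltnn.
apply/negP => dvd_form.
have ndvd_X : ~~ ((l ^ e.+1)%N%:Z %| X ^+ 2)%Z.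
  apply: contra ndvd_DY => dvd_X.
  by rewrite -[D * _](subKr (X ^+ 2)) rpredB.
have X0 : X != 0 by apply: contraNneq ndvd_X => ->; rewrite expr0n dvdz0.
set t := logn l `|X|.
have t_lt : (t.*2.+1 <= e)%N.
  move: ndvd_X; rewrite dvdzX // -/t -ltnNge ltnS leq_eqVlt => /orP[/eqP te|] //.
  by move: odd_e; rewrite -te odd_double.
have : ((l ^ t.*2.+1)%N%:Z %| X ^+ 2)%Z.
  rewrite -[X ^+ 2](subrK (D * Y ^+ 2)) rpredD //.
    apply: dvdz_trans dvd_form; rewrite dvdzE !absz_nat dvdn_exp2l //.
    exact: leqW.
  by apply: dvdz_mulr; rewrite dvdzE absz_nat pfactor_dvdn ?absz_gt0.
by rewrite dvdzX // -/t ltnn.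
Qed.

Lemma norm_form_not_dvd (D : int) : (forall s : int, s ^+ 2 != D) ->
  exists l k : nat, prime l /\ forall X Y : int, ~~ (l %| `|Y|)%N ->
    ~~ ((l ^ k)%N%:Z %| X ^+ 2 - D * Y ^+ 2)%Z.
Proof.
move=> D_nsq; have D0 : D != 0 by have := D_nsq 0; rewrite expr0n eq_sym.
have D_gt0 : (0 < `|D|)%N by rewrite absz_gt0.
have [[m mE] | [l l_prime odd_l]] := square_or_odd_logn D_gt0.
  (* D = - m^2, and l = 3 works because -1 is not a square modulo 3. *)
  have DE : D = - (m ^ 2)%N%:Z.
    by case: D D_nsq mE {D0 D_gt0} => n D_nsq /= mE; [move: (D_nsq m) => /eqP | ]; lia.
  have m_gt0 : (0 < m)%N by move: D0; rewrite DE; case: m {mE DE}.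
  exists 3%N, (logn 3 m).*2.+1; split => // X Y Y3.
  have -> : X ^+ 2 - D * Y ^+ 2 = (`|X| ^ 2 + m ^ 2 * `|Y| ^ 2)%N%:Z by rewrite DE; lia.
  by rewrite dvdzE !absz_nat sum_sq_not_dvd.
by exists l, (logn l `|D|).+1; split => // X Y; apply: norm_form_not_dvd_odd_logn.
Qed.

(* Completing the square: 4 a2 Q(u, v) = (2 a2 u + a1 v)^2 - D v^2, and symmetrically
   in u; coprimality of u and v makes l prime to one of them. *)
Lemma quadratic_form_not_dvd (a0 a1 a2 : int) :
  (forall s : int, s ^+ 2 != a1 ^+ 2 - 4%:R * a2 * a0) ->
  exists l k : nat, prime l /\ forall u v : int, coprime `|u| `|v| ->
    ~~ ((l ^ k)%N%:Z %| a0 * v ^+ 2 + a1 * u * v + a2 * u ^+ 2)%Z.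
Proof.
set D := a1 ^+ 2 - _ => D_nsq.
have [l [k [l_prime lk]]] := norm_form_not_dvd D_nsq.
exists l, k; split => // u v uv.
have : ~~ (l %| `|v|)%N || ~~ (l %| `|u|)%N.
  rewrite -negb_and; apply/negP => /andP[lv lu].
  have : (l %| gcdn `|u| `|v|)%N by rewrite dvdn_gcd lu lv.
  by rewrite (eqP uv) dvdn1 => /eqP l1; move: l_prime; rewrite l1.
case/orP => [lv | lu].
  apply: contra (lk (2%:R * a2 * u + a1 * v) v lv) => dvd_Q.
  have -> : (2%:R * a2 * u + a1 * v) ^+ 2 - D * v ^+ 2
          = 4%:R * a2 * (a0 * v ^+ 2 + a1 * u * v + a2 * u ^+ 2) by rewrite /D; ring.
  exact: dvdz_mull.
apply: contra (lk (2%:R * a0 * v + a1 * u) u lu) => dvd_Q.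
have -> : (2%:R * a0 * v + a1 * u) ^+ 2 - D * u ^+ 2
        = 4%:R * a0 * (a0 * v ^+ 2 + a1 * u * v + a2 * u ^+ 2) by rewrite /D; ring.
exact: dvdz_mull.
Qed.

Lemma exists_notin (R : realDomainType) (s : seq R) : exists x, x \notin s.
Proof.
pose S := \sum_(y <- s) `|y|.
have le_S y : y \in s -> `|y| <= S.
  by move=> sy; rewrite /S (big_rem _ sy) /= lerDl sumr_ge0.
exists (1 + S); apply/negP => /le_S.
by rewrite ger0_norm ?addr_ge0 ?sumr_ge0 //; lra.
Qed.

(* For g u := a u + b + c / u we have g (2m/3) + g (2m/3) + g (-m/3) = a m + 3 b,
   so six values of g reach any target a (m1 + m2) + 6 b. *)
Lemma is_base_hyperbola (X : rat -> Prop) (a b c w : rat) :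
  a != 0 -> c != 0 ->
  (forall u, u != 0 -> u != w -> X (a * u + b + c / u)) -> is_base X.
Proof.
move=> a0 c0 Xg; pose g u := a * u + b + c / u.
have Xg3 m : m != 0 -> m != 3%:R / 2%:R * w -> m != - 3%:R * w ->
    X (g (2%:R / 3%:R * m)) /\ X (g (- (1 / 3%:R) * m)).
  move=> m0 m1 m2; split; apply: Xg; rewrite ?mulf_neq0 //.
    by apply: contra m1 => /eqP E; apply/eqP; lra.
  by apply: contra m2 => /eqP E; apply/eqP; lra.
exists 6%N; split => // y; pose T := (y - 6%:R * b) / a.
have [m1] := exists_notin [:: 0; 3%:R / 2%:R * w; - 3%:R * w;
                              T; T - 3%:R / 2%:R * w; T + 3%:R * w].
rewrite !inE !negb_or => /and5P[m10 m1w1 m1w2 m1T /andP[m2w1 m2w2]].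
pose m2 := T - m1.
have [X1 X1'] := Xg3 m1 m10 m1w1 m1w2.
have [X2 X2'] : X (g (2%:R / 3%:R * m2)) /\ X (g (- (1 / 3%:R) * m2)).
  apply: Xg3; rewrite /m2 ?subr_eq0 1?eq_sym //.
    by apply: contra m2w1 => /eqP E; apply/eqP; lra.
  by apply: contra m2w2 => /eqP E; apply/eqP; lra.
have m20 : m2 != 0 by rewrite /m2 subr_eq0 eq_sym.
exists [:: g (2%:R / 3%:R * m1); g (2%:R / 3%:R * m1); g (- (1 / 3%:R) * m1);
           g (2%:R / 3%:R * m2); g (2%:R / 3%:R * m2); g (- (1 / 3%:R) * m2)].
split => //; split.
  by move=> x; rewrite !inE => /or4P[|||/or3P[||]] /eqP->.
have -> : y = a * (m1 + m2) + 6%:R * b by rewrite /m2 /T; field.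
by rewrite !big_cons big_nil /g; field; rewrite m10 m20.
Qed.

(* Every y is g v - g w = (v - w) (A (v + w) + B) with v - w = e large enough
   that neither v nor w vanishes. *)
Lemma is_virtual_base_quadratic (X : rat -> Prop) (A B C : rat) :
  A != 0 -> (forall u, u != 0 -> X (A * u ^+ 2 + B * u + C)) -> is_virtual_base X.
Proof.
move=> A0 Xg; exists 2%N; split => // y.
pose e := 1 + (`|B| + `|y|) / `|A|.
have A_gt0 : 0 < `|A| by rewrite normr_gt0.
have e_ge1 : 1 <= e by rewrite lerDl divr_ge0 // addr_ge0.
have e_ge0 : 0 <= e by apply: le_trans e_ge1.
have e0 : e != 0 by rewrite gt_eqF // (lt_le_trans ltr01).
have e_big : `|y| + `|B| * e < `|A| * e ^+ 2.
  have -> : `|A| * e ^+ 2 = `|A| * e + (`|B| + `|y|) * e.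
    by rewrite /e; field; rewrite gt_eqF.
  have := normr_ge0 y; clearbody e; nra.
pose S := (y / e - B) / A.
have yE : y = e * (A * S + B) by rewrite /S; field; rewrite A0 e0.
have S_ne t : `|t| = e -> S != t.
  move=> te; apply: contraTneq e_big => St; rewrite -leNgt.
  have /(congr1 Num.norm) : y - B * e = e * A * t by rewrite yE St; ring.
  rewrite !normrM te ger0_norm // => E.
  have -> : `|A| * e ^+ 2 = `|y - B * e| by rewrite E; ring.
  by rewrite -[X in _ <= _ + _ * X]ger0_norm // -normrM ler_normB.
pose v := (S + e) / 2%:R; pose w := (S - e) / 2%:R.
have v0 : v != 0.
  rewrite /v mulf_eq0 invr_eq0 pnatr_eq0 orbF addr_eq0.
  by apply: S_ne; rewrite normrN ger0_norm.
have w0 : w != 0.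
  rewrite /w mulf_eq0 invr_eq0 pnatr_eq0 orbF subr_eq0.
  by apply: S_ne; rewrite ger0_norm.
exists [:: A * v ^+ 2 + B * v + C; A * w ^+ 2 + B * w + C], [:: false; true].
split => //; split => //; split.
  by move=> x; rewrite !inE => /orP[] /eqP ->; apply: Xg.
by rewrite !big_ord_recr big_ord0 /= yE /v /w; field.
Qed.

Lemma sumset_ge (X : rat -> Prop) (m : rat) (N : nat) (y : rat) :
  (forall z, X z -> m <= z) -> sumset X N y -> N%:R * m <= y.
Proof.
move=> Xm [xs [<- [Xxs ->]]].
rewrite -sum1_size natr_sum mulr_suml !big_seq.
by apply: ler_sum => x xs_x; rewrite mul1r; apply/Xm/Xxs.
Qed.

Lemma sumset_le (X : rat -> Prop) (M : rat) (N : nat) (y : rat) :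
  (forall z, X z -> z <= M) -> sumset X N y -> y <= N%:R * M.
Proof.
move=> XM [xs [<- [Xxs ->]]].
rewrite -sum1_size natr_sum mulr_suml !big_seq.
by apply: ler_sum => x xs_x; rewrite mul1r; apply/XM/Xxs.
Qed.

Lemma not_base_bounded_below (X : rat -> Prop) (m : rat) :
  (forall z, X z -> m <= z) -> ~ is_base X.
Proof. by move=> Xm [N [_ XN]]; have := sumset_ge Xm (XN (N%:R * m - 1)); lra. Qed.

Lemma not_base_bounded_above (X : rat -> Prop) (M : rat) :
  (forall z, X z -> z <= M) -> ~ is_base X.
Proof. by move=> XM [N [_ XN]]; have := sumset_le XM (XN (N%:R * M + 1)); lra. Qed.

Lemma not_base_quadratic (X : rat -> Prop) (A B C : rat) :
  A != 0 -> (forall z, X z -> exists u, z = A * u ^+ 2 + B * u + C) -> ~ is_base X.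
Proof.
move=> A0 XA; pose m := C - B ^+ 2 / (4%:R * A).
have gm u : A * u ^+ 2 + B * u + C - m = (2%:R * A * u + B) ^+ 2 / (4%:R * A).
  by rewrite /m; field.
case: ltrgtP A0 => // [A_lt0 | A_gt0] _.
- apply: (@not_base_bounded_above _ m) => z /XA[u ->].
  by rewrite -subr_le0 gm mulr_ge0_le0 ?sqr_ge0 // invr_le0; lra.
- apply: (@not_base_bounded_below _ m) => z /XA[u ->].
  by rewrite -subr_ge0 gm divr_ge0 ?sqr_ge0 //; lra.
Qed.

Definition l_integral (l : nat) (z : rat) : Prop :=
  exists n d : int, ~~ (l %| `|d|)%N /\ z = n%:~R / d%:~R.

Section LIntegral.

Variable l : nat.
Hypothesis l_prime : prime l.

Let l_neq0 : l%:R != 0 :> rat.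
Proof. by rewrite pnatr_eq0 -lt0n prime_gt0. Qed.

Let ndvd_neq0 (d : int) : ~~ (l %| `|d|)%N -> d%:~R != 0 :> rat.
Proof. by apply: contra; rewrite intr_eq0 => /eqP ->; rewrite dvdn0. Qed.

Lemma l_integral0 : l_integral l 0.
Proof.
exists 0, 1; rewrite mul0r; split => //.
by rewrite dvdn1 neq_ltn prime_gt1 ?orbT.
Qed.

Lemma l_integralD x y : l_integral l x -> l_integral l y -> l_integral l (x + y).
Proof.
move=> [n1 [d1 [d1l ->]]] [n2 [d2 [d2l ->]]].
exists (n1 * d2 + n2 * d1), (d1 * d2); split.
  by rewrite abszM Euclid_dvdM // negb_or d1l d2l.
have d1_neq0 := ndvd_neq0 d1l; have d2_neq0 := ndvd_neq0 d2l.
by rewrite !rmorphD !rmorphM /=; field; rewrite d1_neq0 d2_neq0.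
Qed.

Lemma l_integral_sign (b : bool) x : l_integral l x -> l_integral l ((-1) ^+ b * x).
Proof.
move=> [n [d [dl ->]]]; exists ((-1) ^+ b * n), d; split => //.
by rewrite rmorphM rmorph_sign mulrA.
Qed.

Lemma l_integral_sum N (F : 'I_N -> rat) :
  (forall i, l_integral l (F i)) -> l_integral l (\sum_(i < N) F i).
Proof.
by move=> lF; apply: (big_ind (l_integral l)); [exact: l_integral0 | exact: l_integralD |].
Qed.

Lemma not_l_integral_inv : ~ l_integral l l%:R^-1.
Proof.
move=> [n [d [dl E]]].
have dE : d = l%:Z * n.
  apply: (@intr_inj rat); rewrite rmorphM /= -[n%:~R](divfK (ndvd_neq0 dl)) -E pmulrn.
  by field; exact: l_neq0.
by move: dl; rewrite dE abszM absz_nat dvdn_mulr.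
Qed.

Lemma l_integral_ratio (k : nat) (n d : int) : d != 0 ->
  ~~ ((l ^ k)%N %| `|d|)%N -> l_integral l (l%:R ^+ k * (n%:~R / d%:~R)).
Proof.
move=> d0 dk; have d_gt0 : (0 < `|d|)%N by rewrite absz_gt0.
have [m lm dE] := pfactor_coprime l_prime d_gt0.
set j := logn l `|d| in dE.
have jk : (j < k)%N.
  by rewrite ltnNge; apply: contra dk => kj; rewrite dE dvdn_mull // dvdn_exp2l.
exists (n * (l ^ (k - j))%N%:Z), ((-1) ^+ (d < 0)%R * m%:Z); split.
  by rewrite abszMsign absz_nat -prime_coprime.
have m0 : m%:R != 0 :> rat.
  rewrite pnatr_eq0; apply: contraTneq lm => ->.
  by rewrite /coprime gcdn0 neq_ltn prime_gt1 ?orbT.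
rewrite {1}[d]intEsign dE !rmorphM /= -!pmulrn !natrX.
have -> : l%:R ^+ k = l%:R ^+ (k - j) * l%:R ^+ j :> rat by rewrite -exprD subnK // ltnW.
field.
by rewrite m0 intr_eq0 signr_eq0 expf_neq0 ?l_neq0.
Qed.

(* Evaluated at y = l^-(k+1), a signed sum of values would make l^-1 an l-integral rational. *)
Lemma not_virtual_base_l_integral (X : rat -> Prop) (k : nat) :
  (forall z, X z -> l_integral l (l%:R ^+ k * z)) -> ~ is_virtual_base X.
Proof.
move=> Xl [N [_ XN]].
have [xs [eps [size_xs [_ [Xxs yE]]]]] := XN (l%:R ^- k.+1).
apply: not_l_integral_inv.
have -> : l%:R^-1 = l%:R ^+ k * l%:R ^- k.+1 :> rat.
  by rewrite exprS; field; rewrite expf_neq0 l_neq0.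
rewrite yE mulr_sumr; apply: l_integral_sum => // i.
rewrite mulrCA; apply/l_integral_sign/Xl/Xxs.
by apply: mem_nth; rewrite size_xs.
Qed.

End LIntegral.

Lemma horner_quadratic (R : nzSemiRingType) (p : {poly R}) x : (size p <= 3)%N ->
  p.[x] = p`_0 + p`_1 * x + p`_2 * x ^+ 2.
Proof.
move=> sp; rewrite (horner_coef_wide _ sp) !big_ord_recr big_ord0 /=.
by rewrite add0r expr0 mulr1 expr1.
Qed.

Lemma coef_size_pred_neq0 (R : nzSemiRingType) (p : {poly R}) n :
  size p = n.+1 -> p`_n != 0.
Proof.
move=> sp; have : lead_coef p != 0 by rewrite lead_coef_eq0 -size_poly_eq0 sp.
by rewrite lead_coefE sp.
Qed.

Section QuadraticFactor.

Variable F : fieldType.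
Implicit Types (q : {poly F}) (r s x : F).

Lemma quadratic_vieta q r : size q = 3%N -> root q r ->
  forall x, q.[x] = q`_2 * (x - r) * (x - (- q`_1 / q`_2 - r)).
Proof.
move=> sq /eqP; rewrite !horner_quadratic ?sq // => qr x.
have q2 := coef_size_pred_neq0 sq.
have q0E : q`_0 = - q`_1 * r - q`_2 * r ^+ 2.
  by apply/eqP; rewrite -subr_eq0 -[X in _ == X]qr; apply/eqP; ring.
by rewrite horner_quadratic ?sq // q0E; field.
Qed.

Lemma quadratic_two_roots q r s : (size q <= 3)%N -> q != 0 -> r != s ->
  root q r -> root q s -> q`_2 != 0 /\ forall x, q.[x] = q`_2 * (x - r) * (x - s).
Proof.
move=> sq q0 rs qr qs.
have {sq} sq : size q = 3%N.
  apply/eqP; rewrite eqn_leq sq.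
  by apply: (@max_poly_roots _ _ [:: r; s]); rewrite //= ?qr ?qs ?inE ?andbT.
have qE := quadratic_vieta sq qr; split => [|x]; first exact: coef_size_pred_neq0.
suff -> : s = - q`_1 / q`_2 - r by apply: qE.
move: qs; rewrite /root qE !mulf_eq0 !subr_eq0 (negbTE (coef_size_pred_neq0 sq)).
by rewrite [s == r]eq_sym (negbTE rs) => /eqP.
Qed.

Lemma quadratic_double_root q r : size q = 3%N -> root q r ->
  (forall s, root q s -> s = r) -> forall x, q.[x] = q`_2 * (x - r) ^+ 2.
Proof.
move=> sq qr r_uniq x; have qE := quadratic_vieta sq qr.
rewrite qE (r_uniq (- q`_1 / q`_2 - r)) ?expr2 ?mulrA //.
by rewrite /root qE subrr mulr0.
Qed.

Lemma linear_root q r : (size q <= 2)%N -> root q r -> forall x, q.[x] = q`_1 * (x - r).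
Proof.
move=> sq /eqP qr x; have sq3 := leq_trans sq (leqnSn 2).
move: qr; rewrite !horner_quadratic // (nth_default 0 sq) => qr.
by apply/eqP; rewrite -subr_eq0 -[X in _ == X]qr; apply/eqP; ring.
Qed.

End QuadraticFactor.

Lemma horner_shift_inv (F : fieldType) (p : {poly F}) r u : (size p <= 3)%N -> u != 0 ->
  p.[r + u^-1] * u ^+ 2 = p.[r] * u ^+ 2 + (p`_1 + 2%:R * p`_2 * r) * u + p`_2.
Proof. by move=> sp u0; rewrite !horner_quadratic //; field. Qed.

(* The Moebius substitution x = (s u + r) / (u + 1) sends u = 0 and u = oo to the
   poles and turns f into a u + b + c / u. *)
Lemma WP_two_finite_poles (p q : {poly rat}) (c r s : rat) :
  (size p <= 3)%N -> c != 0 -> r != s -> (forall x, q.[x] = c * (x - r) * (x - s)) ->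
  p.[r] != 0 -> p.[s] != 0 -> WP p q.
Proof.
move=> sp c0 rs qE pr ps; have rs0 : r - s != 0 by rewrite subr_eq0.
pose K := c * (r - s) ^+ 2; have K0 : K != 0 by rewrite mulf_neq0 ?expf_neq0.
pose M := 2%:R * p`_0 + p`_1 * (r + s) + 2%:R * p`_2 * r * s.
apply: (@is_base_hyperbola _ (- p.[s] / K) (- M / K) (- p.[r] / K) (-1));
  rewrite ?mulf_neq0 ?invr_eq0 ?oppr_eq0 // => u u0 u1.
have u10 : u + 1 != 0 by apply: contra u1; rewrite addr_eq0.
have qx : q.[(s * u + r) / (u + 1)] = - K * u / (u + 1) ^+ 2.
  by rewrite qE /K; field.
exists ((s * u + r) / (u + 1)); split.
  by rewrite qx !mulf_neq0 ?invr_eq0 ?expf_neq0 ?oppr_eq0.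
by rewrite qx !horner_quadratic // /M /K; field; rewrite u10 u0 rs0 c0.
Qed.

Lemma WP_pole_and_infinity (p q : {poly rat}) (c r : rat) :
  size p = 3%N -> c != 0 -> (forall x, q.[x] = c * (x - r)) -> p.[r] != 0 -> WP p q.
Proof.
move=> sp c0 qE pr; have sp3 : (size p <= 3)%N by rewrite sp.
have p2 := coef_size_pred_neq0 sp.
apply: (@is_base_hyperbola _ (p.[r] / c) ((p`_1 + 2%:R * p`_2 * r) / c) (p`_2 / c) 0);
  rewrite ?mulf_neq0 ?invr_eq0 // => u u0 _.
have qx : q.[r + u^-1] = c / u by rewrite qE (addrC r) addrK.
exists (r + u^-1); split; first by rewrite qx mulf_neq0 ?invr_eq0.
rewrite qx -[p.[r + u^-1]](mulfK (expf_neq0 2 u0)) horner_shift_inv //.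
by field; rewrite u0 c0.
Qed.

Lemma EWP_not_WP_polynomial (p q : {poly rat}) (c : rat) :
  size p = 3%N -> c != 0 -> (forall x, q.[x] = c) -> EWP p q /\ ~ WP p q.
Proof.
move=> sp c0 qE; have sp3 : (size p <= 3)%N by rewrite sp.
have A0 : p`_2 / c != 0 by rewrite mulf_neq0 ?invr_eq0 ?coef_size_pred_neq0.
split.
  apply: (is_virtual_base_quadratic (B := p`_1 / c) (C := p`_0 / c) A0) => u _.
  by exists u; rewrite qE horner_quadratic //; split => //; field.
apply: (not_base_quadratic (B := p`_1 / c) (C := p`_0 / c) A0) => _ [x [_ ->]].
by exists x; rewrite qE horner_quadratic //; field.
Qed.

(* With u = 1 / (x - r), f becomes a quadratic polynomial in u. *)
Lemma EWP_not_WP_double_pole (p q : {poly rat}) (c r : rat) :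
  (size p <= 3)%N -> c != 0 -> (forall x, q.[x] = c * (x - r) ^+ 2) -> p.[r] != 0 ->
  EWP p q /\ ~ WP p q.
Proof.
move=> sp c0 qE pr.
have A0 : p.[r] / c != 0 by rewrite mulf_neq0 ?invr_eq0.
pose B := (p`_1 + 2%:R * p`_2 * r) / c; pose C := p`_2 / c.
have fE u : u != 0 -> p.[r + u^-1] / q.[r + u^-1] = p.[r] / c * u ^+ 2 + B * u + C.
  move=> u0; rewrite -[p.[r + u^-1]](mulfK (expf_neq0 2 u0)) horner_shift_inv //.
  by rewrite qE (addrC r) addrK /B /C; field; rewrite u0 c0.
split.
  apply: (is_virtual_base_quadratic (B := B) (C := C) A0) => u u0.
  exists (r + u^-1); rewrite fE //.
  by rewrite qE (addrC r) addrK mulf_neq0 ?expf_neq0 ?invr_eq0.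
apply: (not_base_quadratic (B := B) (C := C) A0) => _ [x [qx ->]]; exists (x - r)^-1.
have xr : x - r != 0 by apply: contra qx; rewrite qE => /eqP ->; rewrite expr0n mulr0.
by rewrite -fE ?invr_eq0 // invrK addrC subrK.
Qed.

Local Notation pZtoQ := (map_poly (intr : int -> rat)).

Lemma horner_int_quadratic (P : {poly int}) (x : rat) : (size P <= 3)%N ->
  (pZtoQ P).[x] = (P`_0 * denq x ^+ 2 + P`_1 * numq x * denq x + P`_2 * numq x ^+ 2)%:~R
                  / (denq x)%:~R ^+ 2.
Proof.
move=> sP; rewrite horner_quadratic ?size_rat_int_poly // !coef_map /=.
have v0 : (denq x)%:~R != 0 :> rat by rewrite intr_eq0 denq_neq0.
set u := numq x; set v := denq x in v0 *.
by rewrite -(divq_num_den x) -/u -/v !rmorphD !rmorphM /=; field.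
Qed.

Lemma int_quadratic_nonsquare_disc (Q : {poly int}) : size Q = 3%N ->
  (forall x, ~~ root (pZtoQ Q) x) -> forall s : int, s ^+ 2 != Q`_1 ^+ 2 - 4%:R * Q`_2 * Q`_0.
Proof.
move=> sQ Q_noroot s; apply/eqP => sE.
have /negP := Q_noroot ((- (pZtoQ Q)`_1 - s%:~R) / (2%:R * (pZtoQ Q)`_2)); apply.
apply: Pdeg2.Field.deg2_poly_root1; first by rewrite pnatr_eq0.
  by rewrite size_rat_int_poly.
have := congr1 (intr : int -> rat) sE.
by rewrite !coef_map !rmorphXn rmorphB !rmorphM rmorph_nat.
Qed.

Lemma l_integral_int_ratfun_values (P Q : {poly int}) :
  (size P <= 3)%N -> size Q = 3%N -> (forall x, ~~ root (pZtoQ Q) x) ->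
  exists l k : nat, prime l /\
    forall x, l_integral l (l%:R ^+ k * ((pZtoQ P).[x] / (pZtoQ Q).[x])).
Proof.
move=> sP sQ Q_noroot; have sQ3 : (size Q <= 3)%N by rewrite sQ.
have [l [k [l_prime lk]]] := quadratic_form_not_dvd (int_quadratic_nonsquare_disc sQ Q_noroot).
exists l, k; split => // x.
have v0 : (denq x)%:~R ^+ 2 != 0 :> rat by rewrite expf_neq0 // intr_eq0 denq_neq0.
have Qx0 := Q_noroot x.
rewrite /root !horner_int_quadratic // mulf_eq0 invr_eq0 (negbTE v0) orbF intr_eq0 in Qx0.
rewrite !horner_int_quadratic // invf_div (mulrA (_ / _ ^+ 2)) divfK //.
apply: l_integral_ratio => //.
by move: (lk _ _ (coprime_num_den x)); rewrite dvdzE absz_nat.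
Qed.

Lemma not_EWP_no_root (p q : {poly rat}) :
  (size p <= 3)%N -> size q = 3%N -> (forall r, ~~ root q r) -> ~ EWP p q.
Proof.
move=> sp sq q_noroot.
have [P [a a0 pE]] := rat_poly_scale p; have [Q [b b0 qE]] := rat_poly_scale q.
have a0' : a%:~R != 0 :> rat by rewrite intr_eq0.
have b0' : b%:~R != 0 :> rat by rewrite intr_eq0.
have PE : pZtoQ (b *: P) = (b%:~R * a%:~R) *: p.
  by rewrite map_polyZ pE scalerA mulfK.
have QE : pZtoQ (a *: Q) = (b%:~R * a%:~R) *: q.
  by rewrite map_polyZ qE scalerA mulrC mulKf.
have fE x : (pZtoQ (b *: P)).[x] / (pZtoQ (a *: Q)).[x] = p.[x] / q.[x].
  by rewrite PE QE !hornerZ -mulf_div divff ?mul1r // mulf_neq0.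
have sQ : size (a *: Q) = 3%N by rewrite -size_rat_int_poly QE size_scale ?mulf_neq0.
have Q_noroot x : ~~ root (pZtoQ (a *: Q)) x by rewrite QE rootZ ?mulf_neq0.
have sP : (size (b *: P) <= 3)%N by rewrite -size_rat_int_poly PE size_scale ?mulf_neq0.
have [l [k [l_prime lv]]] := l_integral_int_ratfun_values sP sQ Q_noroot.
apply: (not_virtual_base_l_integral l_prime (k := k)) => _ [x [_ ->]].
by rewrite -fE.
Qed.

Section DegreeTwo.

Variables p q : {poly rat}.
Hypothesis pq_lowest : lowest_terms p q.
Hypothesis pq_deg2 : ratfun_deg p q = 2%N.

Let q_neq0 : q != 0. Proof. by case: pq_lowest. Qed.

Let size_p : (size p <= 3)%N. Proof. by move: pq_deg2; rewrite /ratfun_deg; lia. Qed.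

Let size_q : (size q <= 3)%N. Proof. by move: pq_deg2; rewrite /ratfun_deg; lia. Qed.

Let size_pq : size p = 3%N \/ size q = 3%N.
Proof. by move: pq_deg2; rewrite /ratfun_deg; lia. Qed.

Let pole_value r : root q r -> p.[r] != 0.
Proof. by case: pq_lowest => _; rewrite coprimep_sym => /coprimep_root; apply. Qed.

Let size_q_no_infinite_pole : (size p <= size q)%N -> size q = 3%N.
Proof. by case: size_pq; lia. Qed.

Let size_infinite_pole : (size q < size p)%N -> size p = 3%N.
Proof. by case: size_pq; lia. Qed.

Let size_q_gt1 r : root q r -> (1 < size q)%N.
Proof.
move=> qr; rewrite ltnNge; apply/negP => /size1_polyC qE.
by move: qr q_neq0; rewrite qE rootC polyC_eq0 => ->.
Qed.

Let size_q_linear_root : size q = 2%N -> root q (- q`_0 / q`_1).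
Proof.
move=> sq; have q1 : q`_1 != 0 by apply: coef_size_pred_neq0.
by rewrite /root horner_quadratic ?sq // (nth_default 0 (eq_leq sq)); apply/eqP; field.
Qed.

Lemma WP_of_two_poles :
  (exists P1 P2, P1 <> P2 /\ is_pole p q P1 /\ is_pole p q P2) -> WP p q.
Proof.
have finite_and_infinite r : root q r -> (size q < size p)%N -> WP p q.
  move=> qr sqp; have sp := size_infinite_pole sqp.
  have sq2 : size q = 2%N by apply/eqP; rewrite eqn_leq (size_q_gt1 qr) -ltnS -sp sqp.
  apply: (WP_pole_and_infinity sp (coef_size_pred_neq0 sq2) _ (pole_value qr)).
  by apply: linear_root; rewrite ?sq2.
move=> [[r|] [[s|] [rs [/= qr qs]]]] //;
  [| exact: finite_and_infinite qr qs | exact: finite_and_infinite qs qr].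
have rs' : r != s by apply/eqP => rsE; apply: rs; rewrite rsE.
have [q2 qE] := quadratic_two_roots size_q q_neq0 rs' qr qs.
exact: WP_two_finite_poles size_p q2 rs' qE (pole_value qr) (pole_value qs).
Qed.

Lemma EWP_not_WP_of_one_pole :
  (exists P, is_pole p q P /\ forall P', is_pole p q P' -> P' = P) -> EWP p q /\ ~ WP p q.
Proof.
move=> [[r|] [/= qr P_uniq]].
  have sq : size q = 3%N.
    apply: size_q_no_infinite_pole.
    by rewrite leqNgt; apply/negP => sqp; have := P_uniq None sqp.
  apply: (EWP_not_WP_double_pole size_p (coef_size_pred_neq0 sq) _ (pole_value qr)).
  by apply: quadratic_double_root => // s qs; case: (P_uniq (Some s) qs).
have sp := size_infinite_pole qr.
have sq : size q = 1%N.
  have sq0 : (0 < size q)%N by rewrite size_poly_gt0.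
  have sq2 : size q != 2%N.
    by apply/eqP => sq; have := P_uniq (Some _) (size_q_linear_root sq).
  by move: qr sq0 sq2; rewrite sp; case: (size q) => [|[|[|]]].
apply: (EWP_not_WP_polynomial sp (coef_size_pred_neq0 sq)) => x.
have /size1_polyC qE : (size q <= 1)%N by rewrite sq.
by rewrite {1}qE hornerC.
Qed.

Lemma not_EWP_of_no_pole : (forall P, ~ is_pole p q P) -> ~ EWP p q.
Proof.
move=> no_pole; apply: not_EWP_no_root size_p _ _.
  by apply: size_q_no_infinite_pole; rewrite leqNgt; apply/negP; apply: (no_pole None).
by move=> r; apply/negP; apply: (no_pole (Some r)).
Qed.

End DegreeTwo.

Theorem theorem4p3 (p q : {poly rat}) :
  lowest_terms p q -> ratfun_deg p q = 2%N ->
  ((exists P1 P2 : option rat, P1 <> P2 /\ is_pole p q P1 /\ is_pole p q P2) ->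
     WP p q) /\
  ((exists P : option rat, is_pole p q P /\
      forall P' : option rat, is_pole p q P' -> P' = P) ->
     EWP p q /\ ~ WP p q) /\
  ((forall P : option rat, ~ is_pole p q P) -> ~ EWP p q).
Proof.
move=> pq_lowest pq_deg2; split; [|split].
- exact: WP_of_two_poles.
- exact: EWP_not_WP_of_one_pole.
- exact: not_EWP_of_no_pole.
Qed.
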